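(* Let $a>1$ and $b>1$ be irrational numbers, and let $a_n=[an]$ and $b_n=[bn]$ for positive integers $n$. Then $$\lim_{k \to \infty}\frac{1}{k} \sum_{n=1}^\infty \left(\frac{a_{n+k}}{a_n}-\frac{b_{n+k}}{b_n}\right) + \sum_{n=1}^{\infty}\frac{a \{a^{-1} (n+1)\}-b\{b^{-1}(n+1)\}}{n(n+1)}= \log\frac{a}{b}.$$
   Context: For a real number $x$, $[x]$ denotes the greatest integer not exceeding $x$ and $\{x\}=x-[x]$ its fractional part. Here $k$ ranges over positive integers. *)

From Stdlib Require Import Reals.
From Coquelicot Require Import Coquelicot.
Open Scope R_scope.

(* [x] = greatest integer not exceeding x (Stdlib's Int_part is the floor). *)
Definition flr (x : R) : R := IZR (Int_part x).

Definition frc (x : R) : R := x - flr x.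

Definition irrational (x : R) : Prop :=
  ~ exists p q : Z, q <> 0%Z /\ x = IZR p / IZR q.

Definition bseq (a : R) (n : nat) : R := flr (a * INR n).

Definition term1 (a b : R) (k n : nat) : R :=
  bseq a (n + k) / bseq a n - bseq b (n + k) / bseq b n.

Definition term2 (a b : R) (n : nat) : R :=
  (a * frc (/ a * INR (n + 1)) - b * frc (/ b * INR (n + 1)))
  / (INR n * INR (n + 1)).

From Stdlib Require Import Reals Lra Lia ZArith.
From Coquelicot Require Import Coquelicot.
Open Scope R_scope.

(** Fix an irrational c > 1 and write F n = [c n].  Since c is irrational,
    m is a value of F exactly when χ(m) = [(m+1)/c] - [m/c] equals 1, so
    Σ_{n≤N} 1/F n = Σ_{m≤F N} χ(m)/m.  Abel summation with
    c χ(m) = 1 - c{(m+1)/c} + c{m/c} then shows that Σ_n (c/F n - 1/n)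
    converges to 1 + log c - T_c, where T_c = Σ_m c{(m+1)/c}/(m(m+1)) is the
    second series of the theorem, using H(F N) - H(N) → log c for the
    harmonic numbers H.  Finally
      F(n+k)/F n = 1 + k/n + k (c/F n - 1/n) + (r n - r (n+k)) + s_k n
    with r n = {c n}/F n, and both error series sum to O(H k) = O(log k).
    The terms 1 + k/n cancel between a and b, so the first series is
    k (log a - T_a - log b + T_b) + O(log k). *)

Fixpoint sum1 (f : nat -> R) (N : nat) : R :=
  match N with O => 0 | S N' => sum1 f N' + f (S N') end.

Lemma sum_n_sum1 (f : nat -> R) (N : nat) :
  sum_n (fun m => f (S m)) N = sum1 f (S N).
Proof.
  induction N as [|N IH].
  - rewrite sum_O. simpl. ring.
  - rewrite sum_Sn, IH. simpl. unfold plus; simpl. ring.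
Qed.

Lemma sum1_ext (f g : nat -> R) (N : nat) :
  (forall m, (1 <= m <= N)%nat -> f m = g m) -> sum1 f N = sum1 g N.
Proof.
  induction N as [|N IH]; intro Hfg; simpl; [reflexivity|].
  rewrite IH by (intros; apply Hfg; lia). rewrite Hfg by lia. reflexivity.
Qed.

Lemma sum1_le (f g : nat -> R) (N : nat) :
  (forall m, (1 <= m <= N)%nat -> f m <= g m) -> sum1 f N <= sum1 g N.
Proof.
  induction N as [|N IH]; intro Hfg; simpl; [lra|].
  assert (sum1 f N <= sum1 g N) by (apply IH; intros; apply Hfg; lia).
  assert (f (S N) <= g (S N)) by (apply Hfg; lia). lra.
Qed.

Lemma sum1_nonneg (f : nat -> R) (N : nat) :
  (forall m, (1 <= m <= N)%nat -> 0 <= f m) -> 0 <= sum1 f N.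
Proof.
  intro Hf. replace 0 with (sum1 (fun _ => 0) N).
  - apply sum1_le. exact Hf.
  - clear Hf. induction N as [|N IH]; simpl; lra.
Qed.

Lemma sum1_scal (c : R) (f : nat -> R) (N : nat) :
  sum1 (fun m => c * f m) N = c * sum1 f N.
Proof. induction N as [|N IH]; simpl; [ring|]. rewrite IH. ring. Qed.

Lemma sum1_minus (f g : nat -> R) (N : nat) :
  sum1 (fun m => f m - g m) N = sum1 f N - sum1 g N.
Proof. induction N as [|N IH]; simpl; [ring|]. rewrite IH. ring. Qed.

Lemma sum1_gap (g : nat -> R) (A B : nat) : (A < B)%nat ->
  (forall m, (A < m < B)%nat -> g m = 0) -> sum1 g B = sum1 g A + g B.
Proof.
  intros HAB Hg. destruct B as [|B]; [lia|]. simpl.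
  assert (Hzero : forall d, (forall m, (A < m <= A + d)%nat -> g m = 0) ->
                    sum1 g (A + d) = sum1 g A).
  { induction d as [|d IH]; intro Hd.
    - now rewrite Nat.add_0_r.
    - rewrite Nat.add_succ_r. simpl. rewrite IH by (intros; apply Hd; lia).
      rewrite Hd by lia. ring. }
  rewrite <- (Hzero (B - A)%nat) by (intros m Hm; apply Hg; lia).
  now replace (A + (B - A))%nat with B by lia.
Qed.

Lemma sum1_shift_sub (g : nat -> R) (k N : nat) :
  sum1 (fun m => g m - g (m + k)%nat) N = sum1 g k - (sum1 g (N + k) - sum1 g N).
Proof. induction N as [|N IH]; simpl; [ring|]. rewrite IH. ring. Qed.

Lemma sum1_window_lim (g : nat -> R) (k : nat) :
  is_lim_seq g 0 -> is_lim_seq (fun N => sum1 g (N + k) - sum1 g N) 0.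
Proof.
  intro Hg. induction k as [|k IH].
  - apply is_lim_seq_ext with (fun _ => 0); [|apply is_lim_seq_const].
    intro n. rewrite Nat.add_0_r. ring.
  - apply is_lim_seq_ext with (fun N => (sum1 g (N + k) - sum1 g N) + g (N + S k)%nat).
    + intro n. rewrite Nat.add_succ_r. simpl. ring.
    + replace 0 with (0 + 0) by ring. apply is_lim_seq_plus'; [exact IH|].
      apply (is_lim_seq_incr_n g (S k) 0). exact Hg.
Qed.

Lemma is_series_telescope (g : nat -> R) (k : nat) :
  is_lim_seq g 0 -> is_series (fun m => g (S m) - g (S m + k)%nat) (sum1 g k).
Proof.
  intro Hg. unfold is_series.
  change (is_lim_seq (sum_n (fun m => g (S m) - g (S m + k)%nat)) (sum1 g k)).
  apply is_lim_seq_ext with (fun N => sum1 g k - (sum1 g (S N + k) - sum1 g (S N))).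
  - intro N. now rewrite (sum_n_sum1 (fun m => g m - g (m + k)%nat)), sum1_shift_sub.
  - assert (L : is_lim_seq (fun N => sum1 g k - (sum1 g (S N + k) - sum1 g (S N)))
                  (sum1 g k - 0)).
    { apply is_lim_seq_minus'; [apply is_lim_seq_const|].
      apply (is_lim_seq_incr_1 (fun N => sum1 g (N + k) - sum1 g N)).
      now apply sum1_window_lim. }
    now rewrite Rminus_0_r in L.
Qed.

Lemma lim_inv_INR : is_lim_seq (fun n => / INR n) 0.
Proof.
  replace (Finite 0) with (Rbar_inv p_infty) by reflexivity.
  apply is_lim_seq_inv; [apply is_lim_seq_INR | discriminate].
Qed.

Lemma lim_div_INR (c : R) : is_lim_seq (fun n => c / INR n) 0.
Proof.
  assert (L := is_lim_seq_scal_l _ c _ lim_inv_INR). simpl in L.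
  now rewrite Rmult_0_r in L.
Qed.

Lemma is_lim_seq_le_inv_INR (u : nat -> R) :
  (forall n, (1 <= n)%nat -> 0 <= u n <= / INR n) -> is_lim_seq u 0.
Proof.
  intro Hu. apply (is_lim_seq_incr_1 u).
  apply is_lim_seq_le_le with (fun _ => 0) (fun n => / INR (S n)).
  - intro n. apply Hu. lia.
  - apply is_lim_seq_const.
  - apply (is_lim_seq_incr_1 (fun n => / INR n)). exact lim_inv_INR.
Qed.

Lemma Rinv_mul_between (c u v y : R) :
  0 < c -> c * u <= y < c * v -> u <= / c * y < v.
Proof.
  intros Hc [H1 H2]. pose proof (Rinv_0_lt_compat c Hc).
  replace (/ c * y) with (u + / c * (y - c * u)) by (field; lra).
  assert (0 <= / c * (y - c * u)) by (apply Rmult_le_pos; lra).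
  assert (/ c * (y - c * u) < / c * (c * v - c * u)) by (apply Rmult_lt_compat_l; lra).
  replace (/ c * (c * v - c * u)) with (v - u) in * by (field; lra).
  lra.
Qed.

Lemma flr_unique (x : R) (z : Z) : IZR z <= x < IZR z + 1 -> flr x = IZR z.
Proof.
  intros [H1 H2]. unfold flr, Int_part.
  assert (Hu : (z + 1)%Z = up x) by (apply tech_up; rewrite plus_IZR; simpl; lra).
  rewrite <- Hu. f_equal. ring.
Qed.

Lemma flr_bounds (x : R) : flr x <= x < flr x + 1.
Proof. unfold flr. destruct (base_Int_part x). lra. Qed.

Lemma frc_bounds (x : R) : 0 <= frc x < 1.
Proof. unfold frc. pose proof (flr_bounds x). lra. Qed.

Lemma IZR_le_of_sub1_lt (z0 z1 : Z) : IZR z0 - 1 < IZR z1 -> IZR z0 <= IZR z1.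
Proof.
  intro H. apply IZR_le.
  assert (H' : IZR (z0 - 1) < IZR z1) by (rewrite minus_IZR; simpl; lra).
  apply lt_IZR in H'. lia.
Qed.

Section Floor_sequence.

Variable c : R.
Hypothesis c_gt1 : 1 < c.

Lemma bseq_bounds (n : nat) : c * INR n - 1 < bseq c n <= c * INR n.
Proof. unfold bseq. destruct (flr_bounds (c * INR n)). lra. Qed.

Lemma bseq_0 : bseq c 0 = 0.
Proof. unfold bseq. simpl. rewrite Rmult_0_r. apply (flr_unique 0 0). simpl. lra. Qed.

Lemma bseq_ge (n : nat) : INR n <= bseq c n.
Proof.
  pose proof (bseq_bounds n) as [H1 _]. pose proof (pos_INR n).
  assert (0 <= (c - 1) * INR n) by (apply Rmult_le_pos; lra).
  rewrite INR_IZR_INZ. unfold bseq, flr in *. apply IZR_le_of_sub1_lt.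
  rewrite <- INR_IZR_INZ. nra.
Qed.

Lemma bseq_le (n m : nat) : (n <= m)%nat -> bseq c n <= bseq c m.
Proof.
  intros Hnm. pose proof (bseq_bounds n). pose proof (bseq_bounds m).
  apply le_INR in Hnm.
  assert (0 <= c * (INR m - INR n)) by (apply Rmult_le_pos; lra).
  unfold bseq, flr in *. apply IZR_le_of_sub1_lt. nra.
Qed.

Lemma bseq_succ (n : nat) : bseq c n + 1 <= bseq c (S n).
Proof.
  pose proof (bseq_bounds n). pose proof (bseq_bounds (S n)).
  rewrite S_INR in *. unfold bseq, flr in *.
  rewrite <- (plus_IZR _ 1). apply IZR_le_of_sub1_lt. rewrite plus_IZR. nra.
Qed.

Lemma bseq_pos (n : nat) : (1 <= n)%nat -> 0 < bseq c n.
Proof. intros Hn. pose proof (bseq_ge n). apply le_INR in Hn. simpl in Hn. lra. Qed.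

Definition bnat (n : nat) : nat := Z.to_nat (Int_part (c * INR n)).

Lemma INR_bnat (n : nat) : INR (bnat n) = bseq c n.
Proof.
  unfold bnat. pose proof (bseq_ge n). pose proof (pos_INR n).
  unfold bseq, flr in *.
  assert (Hz : (0 <= Int_part (c * INR n))%Z) by (apply le_IZR; simpl; lra).
  now rewrite INR_IZR_INZ, Z2Nat.id.
Qed.

Lemma bnat_ge (n : nat) : (n <= bnat n)%nat.
Proof. apply INR_le. rewrite INR_bnat. apply bseq_ge. Qed.

Lemma bnat_lt_succ (n : nat) : (bnat n < bnat (S n))%nat.
Proof. apply INR_lt. rewrite !INR_bnat. pose proof (bseq_succ n). lra. Qed.

Lemma bnat_0 : bnat 0 = 0%nat.
Proof. apply INR_eq. now rewrite INR_bnat, bseq_0. Qed.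

Lemma bnat_eventually : filterlim bnat eventually eventually.
Proof.
  intros P [M HM]. exists M. intros n Hn. apply HM.
  pose proof (bnat_ge n). lia.
Qed.

Lemma lim_bseq_shift_ratio (d : R) : 0 <= d <= 1 ->
  is_lim_seq (fun N => (bseq c (S N) + d) / (INR (S N) + d)) c.
Proof.
  intro Hd.
  apply is_lim_seq_le_le with (fun N => c - c / INR (S N)) (fun _ => c).
  - intro N. pose proof (bseq_bounds (S N)). pose proof (lt_0_INR (S N) ltac:(lia)).
    set (x := INR (S N)) in *. set (F := bseq c (S N)) in *.
    assert (Hinv : / (x + d) <= / x) by (apply Rinv_le_contravar; lra).
    assert (Hpos : 0 < / (x + d)) by (apply Rinv_0_lt_compat; lra).
    replace ((F + d) / (x + d)) with (c - (c * (x + d) - (F + d)) * / (x + d))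
      by (field; lra).
    (* c (x + d) - (F + d) < 1 + (c - 1) d <= c because d <= 1. *)
    assert (0 <= (c * (x + d) - (F + d)) * / (x + d)) by (apply Rmult_le_pos; nra).
    assert ((c * (x + d) - (F + d)) * / (x + d) <= c * / x).
    { apply Rle_trans with (c * / (x + d)); [apply Rmult_le_compat_r; nra|].
      apply Rmult_le_compat_l; lra. }
    unfold Rdiv. lra.
  - assert (L := is_lim_seq_minus' _ _ c 0 (is_lim_seq_const c)
                   (proj1 (is_lim_seq_incr_1 _ 0) (lim_div_INR c))).
    now rewrite Rminus_0_r in L.
  - apply is_lim_seq_const.
Qed.

End Floor_sequence.

Definition harm (N : nat) : R := sum1 (fun m => / INR m) N.

Lemma ln_1_plus_le (y : R) : -1 < y -> ln (1 + y) <= y.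
Proof. intro Hy. rewrite <- (ln_exp y) at 2. apply ln_le; [lra|]. apply exp_ineq1_le. Qed.

Lemma ln_succ_sub_bounds (x : R) : 0 < x -> / (x + 1) <= ln (x + 1) - ln x <= / x.
Proof.
  intro Hx. assert (Hlt : / (x + 1) < 1) by (rewrite <- Rinv_1; apply Rinv_lt_contravar; lra).
  rewrite <- ln_div by lra. split.
  - rewrite <- (Ropp_involutive (ln _)), <- ln_Rinv by (apply Rdiv_lt_0_compat; lra).
    replace (/ ((x + 1) / x)) with (1 + - / (x + 1)) by (field; lra).
    pose proof (ln_1_plus_le (- / (x + 1)) ltac:(lra)). lra.
  - replace ((x + 1) / x) with (1 + / x) by (field; lra).
    apply ln_1_plus_le. pose proof (Rinv_0_lt_compat x Hx). lra.
Qed.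

Lemma harm_sub_bounds (N d : nat) : (1 <= N)%nat ->
  ln (INR (N + d) + 1) - ln (INR N + 1) <= harm (N + d) - harm N
  <= ln (INR (N + d)) - ln (INR N).
Proof.
  intro HN. induction d as [|d IH].
  - rewrite Nat.add_0_r. lra.
  - rewrite Nat.add_succ_r.
    change (harm (S (N + d))) with (harm (N + d) + / INR (S (N + d))).
    rewrite S_INR.
    assert (HNd : 1 <= INR (N + d)) by (apply (le_INR 1); lia).
    assert (/ (INR (N + d) + 1) <= / INR (N + d)) by (apply Rinv_le_contravar; lra).
    pose proof (ln_succ_sub_bounds (INR (N + d)) ltac:(lra)).
    pose proof (ln_succ_sub_bounds (INR (N + d) + 1) ltac:(lra)). split; lra.
Qed.

Lemma harm_le_ln (k : nat) : (1 <= k)%nat -> harm k <= 1 + ln (INR k).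
Proof.
  intro Hk. pose proof (harm_sub_bounds 1 (k - 1) ltac:(lia)) as [_ HB].
  replace (1 + (k - 1))%nat with k in HB by lia.
  change (harm 1) with (0 + / INR 1) in HB. simpl INR in HB.
  rewrite Rinv_1, ln_1 in HB. lra.
Qed.

Lemma lim_harm_div : is_lim_seq (fun k => harm k / INR k) 0.
Proof.
  assert (Lln : is_lim_seq (fun k => ln (INR k) / INR k) 0).
  { apply (is_lim_comp_seq (fun y => ln y / y) INR p_infty 0).
    - apply is_lim_div_ln_p.
    - exists 0%nat. intros n _. discriminate.
    - apply is_lim_seq_INR. }
  assert (L := is_lim_seq_plus' _ _ 0 0 lim_inv_INR Lln). rewrite Rplus_0_r in L.
  apply (is_lim_seq_incr_1 (fun k => harm k / INR k)).
  apply is_lim_seq_le_le with (fun _ => 0) (fun k => / INR (S k) + ln (INR (S k)) / INR (S k)).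
  - intro k. pose proof (lt_0_INR (S k) ltac:(lia)).
    pose proof (harm_le_ln (S k) ltac:(lia)).
    assert (0 <= harm (S k)) by (apply sum1_nonneg; intros m Hm;
      apply Rlt_le, Rinv_0_lt_compat, lt_0_INR; lia).
    replace (/ INR (S k) + ln (INR (S k)) / INR (S k)) with ((1 + ln (INR (S k))) / INR (S k))
      by (field; lra).
    unfold Rdiv. split; [apply Rmult_le_pos|apply Rmult_le_compat_r];
      try apply Rlt_le, Rinv_0_lt_compat; lra.
  - apply is_lim_seq_const.
  - exact (proj1 (is_lim_seq_incr_1 _ 0) L).
Qed.

Lemma lim_harm_bnat_sub (c : R) : 1 < c ->
  is_lim_seq (fun N => harm (bnat c N) - harm N) (ln c).
Proof.
  intro Hc. apply (is_lim_seq_incr_1 (fun N => harm (bnat c N) - harm N)).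
  assert (Hlo := lim_bseq_shift_ratio c Hc 1 ltac:(lra)).
  assert (Hhi := lim_bseq_shift_ratio c Hc 0 ltac:(lra)).
  apply (is_lim_seq_continuous ln) in Hlo, Hhi;
    try (apply continuity_pt_filterlim, continuous_ln; lra).
  apply is_lim_seq_le_le with
    (fun N => ln ((bseq c (S N) + 1) / (INR (S N) + 1)))
    (fun N => ln ((bseq c (S N) + 0) / (INR (S N) + 0))); [|exact Hlo|exact Hhi].
  intro N. pose proof (lt_0_INR (S N) ltac:(lia)). pose proof (bseq_ge c Hc (S N)).
  pose proof (harm_sub_bounds (S N) (bnat c (S N) - S N) ltac:(lia)) as HB.
  replace (S N + (bnat c (S N) - S N))%nat with (bnat c (S N)) in HB
    by (pose proof (bnat_ge c Hc (S N)); lia).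
  rewrite INR_bnat in HB by exact Hc. rewrite !Rplus_0_r, !ln_div by lra. exact HB.
Qed.

Section Beatty.

Variable c : R.
Hypothesis c_gt1 : 1 < c.
Hypothesis c_irr : irrational c.

(* [hit m] is 1 when m is a value of [bnat c] and 0 otherwise. *)
Definition hit (m : nat) : R := flr (/ c * INR (m + 1)) - flr (/ c * INR m).

Definition frac_term (m : nat) : R :=
  c * frc (/ c * INR (m + 1)) / (INR m * INR (m + 1)).

Definition recip_dev (n : nat) : R := c / bseq c n - / INR n.

Lemma irrational_mul_INR_neq (m n : nat) : c * INR (S n) <> INR m.
Proof.
  intros E. apply c_irr. exists (Z.of_nat m), (Z.of_nat (S n)). split; [lia|].
  rewrite <- !INR_IZR_INZ, <- E. field. apply not_0_INR. lia.
Qed.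

Lemma hit_gap (n m : nat) : (bnat c n < m < bnat c (S n))%nat -> hit m = 0.
Proof.
  intros [H1 H2].
  assert (I0 : bseq c n + 1 <= INR m).
  { rewrite <- (INR_bnat c c_gt1), <- S_INR. apply le_INR. exact H1. }
  assert (I1 : INR m + 1 <= bseq c (S n)).
  { rewrite <- (INR_bnat c c_gt1), <- S_INR. apply le_INR. exact H2. }
  pose proof (bseq_bounds c n) as [B1 _]. pose proof (bseq_bounds c (S n)) as [_ B2].
  pose proof (irrational_mul_INR_neq (m + 1) n) as Hne.
  rewrite S_INR in B2, Hne. rewrite plus_INR in Hne. simpl INR in Hne.
  unfold hit. rewrite plus_INR. simpl INR.
  rewrite (flr_unique (/ c * (INR m + 1)) (Z.of_nat n)),
    (flr_unique (/ c * INR m) (Z.of_nat n)); [ring| |].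
  all: rewrite <- INR_IZR_INZ; apply Rinv_mul_between; [lra|split; [lra|]]; try lra.
Qed.

Lemma hit_bnat (n : nat) : hit (bnat c (S n)) = 1.
Proof.
  pose proof (bseq_bounds c (S n)) as [B1 B2].
  pose proof (irrational_mul_INR_neq (bnat c (S n)) n) as Hne.
  rewrite INR_bnat in Hne by exact c_gt1.
  unfold hit. rewrite plus_INR, INR_bnat by exact c_gt1. simpl INR. rewrite S_INR in *.
  rewrite (flr_unique _ (Z.of_nat (S n))), (flr_unique _ (Z.of_nat n)).
  - rewrite <- !INR_IZR_INZ, S_INR. ring.
  - rewrite <- INR_IZR_INZ. apply Rinv_mul_between; lra.
  - rewrite <- INR_IZR_INZ, S_INR. apply Rinv_mul_between; lra.
Qed.

Lemma sum1_inv_bseq (N : nat) :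
  sum1 (fun n => / bseq c n) N = sum1 (fun m => hit m / INR m) (bnat c N).
Proof.
  induction N as [|N IH]; [now rewrite bnat_0|].
  rewrite (sum1_gap _ (bnat c N) (bnat c (S N))).
  - simpl. rewrite IH, hit_bnat, INR_bnat by exact c_gt1. unfold Rdiv. ring.
  - now apply bnat_lt_succ.
  - intros m Hm. rewrite (hit_gap N m Hm). unfold Rdiv. ring.
Qed.

(* Abel summation, based on c * hit m = 1 - c{(m+1)/c} + c{m/c}. *)
Lemma sum1_hit_div (M : nat) :
  sum1 (fun m => c * hit m / INR m) M
  = harm M + 1 - sum1 frac_term M - c * frc (/ c * INR (S M)) / INR (S M).
Proof.
  induction M as [|M IH].
  - simpl. unfold harm, frc. simpl. rewrite Rmult_1_r.
    rewrite (flr_unique (/ c) 0).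
    + field. lra.
    + assert (/ c < 1) by (rewrite <- Rinv_1; apply Rinv_lt_contravar; lra).
      pose proof (Rinv_0_lt_compat c ltac:(lra)). simpl. lra.
  - change (sum1 ?f (S M)) with (sum1 f M + f (S M)).
    change (harm (S M)) with (harm M + / INR (S M)).
    rewrite IH. unfold hit, frac_term, frc. rewrite !Nat.add_1_r, (S_INR (S M)).
    assert (1 <= INR (S M)) by (apply (le_INR 1); lia).
    field. lra.
Qed.

Lemma sum1_recip_dev (N : nat) :
  sum1 recip_dev N
  = harm (bnat c N) - harm N + 1 - sum1 frac_term (bnat c N)
    - c * frc (/ c * INR (S (bnat c N))) / INR (S (bnat c N)).
Proof.
  unfold recip_dev. rewrite sum1_minus. fold (harm N).
  unfold Rdiv at 1. rewrite sum1_scal, sum1_inv_bseq, <- sum1_scal.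
  rewrite (sum1_ext _ (fun m => c * hit m / INR m)) by (intros; unfold Rdiv; ring).
  rewrite sum1_hit_div. ring.
Qed.

Lemma frac_term_bounds (m : nat) : (1 <= m)%nat ->
  0 <= frac_term m <= c / INR m - c / INR (m + 1).
Proof.
  intros Hm. unfold frac_term. pose proof (frc_bounds (/ c * INR (m + 1))).
  set (y := frc (/ c * INR (m + 1))) in *.
  rewrite plus_INR. simpl INR.
  assert (1 <= INR m) by (apply (le_INR 1); exact Hm).
  replace (c / INR m - c / (INR m + 1)) with (c * / (INR m * (INR m + 1))) by (field; lra).
  assert (0 < / (INR m * (INR m + 1))) by (apply Rinv_0_lt_compat; nra).
  unfold Rdiv. split; [apply Rmult_le_pos; nra|]. apply Rmult_le_compat_r; nra.
Qed.

Lemma ex_series_frac_term : ex_series (fun m => frac_term (S m)).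
Proof.
  apply (@ex_series_le R_AbsRing R_CompleteNormedModule _
           (fun m => c / INR (S m) - c / INR (S m + 1))).
  - intro m. pose proof (frac_term_bounds (S m) ltac:(lia)).
    change norm with Rabs. rewrite Rabs_pos_eq; lra.
  - eexists. apply (is_series_telescope (fun n => c / INR n) 1). apply lim_div_INR.
Qed.

Lemma lim_frac_boundary :
  is_lim_seq (fun N => c * frc (/ c * INR (S (bnat c N))) / INR (S (bnat c N))) 0.
Proof.
  apply is_lim_seq_le_le with (fun _ => 0) (fun N => c / INR (S N)).
  - intro N. pose proof (frc_bounds (/ c * INR (S (bnat c N)))).
    pose proof (bnat_ge c c_gt1 N).
    assert (INR (S N) <= INR (S (bnat c N))) by (apply le_INR; lia).
    pose proof (lt_0_INR (S N) ltac:(lia)). unfold Rdiv. split.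
    + apply Rmult_le_pos; [nra|]. apply Rlt_le, Rinv_0_lt_compat; lra.
    + apply Rle_trans with (c * / INR (S (bnat c N))).
      * apply Rmult_le_compat_r; [apply Rlt_le, Rinv_0_lt_compat; lra|nra].
      * apply Rmult_le_compat_l; [lra|]. apply Rinv_le_contravar; lra.
  - apply is_lim_seq_const.
  - exact (proj1 (is_lim_seq_incr_1 _ 0) (lim_div_INR c)).
Qed.

Lemma is_series_recip_dev :
  is_series (fun m => recip_dev (S m)) (1 + ln c - Series (fun m => frac_term (S m))).
Proof.
  set (T := Series (fun m => frac_term (S m))).
  assert (HT : is_lim_seq (sum1 frac_term) T).
  { apply (is_lim_seq_incr_1 (sum1 frac_term)).
    apply is_lim_seq_ext with (sum_n (fun m => frac_term (S m))); [apply sum_n_sum1|].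
    exact (Series_correct _ ex_series_frac_term). }
  unfold is_series. change (is_lim_seq (sum_n (fun m => recip_dev (S m))) (1 + ln c - T)).
  apply is_lim_seq_ext with (fun N => sum1 recip_dev (S N)); [intro; symmetry; apply sum_n_sum1|].
  apply (is_lim_seq_incr_1 (sum1 recip_dev)).
  apply is_lim_seq_ext with (fun N => harm (bnat c N) - harm N + 1 - sum1 frac_term (bnat c N)
    - c * frc (/ c * INR (S (bnat c N))) / INR (S (bnat c N))); [intro; symmetry; apply sum1_recip_dev|].
  replace (1 + ln c - T) with (ln c + 1 - T - 0) by ring.
  apply is_lim_seq_minus'; [|exact lim_frac_boundary].
  apply is_lim_seq_minus'; [|exact (is_lim_seq_subseq _ _ _ (bnat_eventually c c_gt1) HT)].
  apply is_lim_seq_plus'; [exact (lim_harm_bnat_sub c c_gt1)|apply is_lim_seq_const].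
Qed.

End Beatty.

Section Ratio_decomposition.

Variable c : R.
Hypothesis c_gt1 : 1 < c.

Definition err_ratio (n : nat) : R := frc (c * INR n) / bseq c n.

Definition err_cross (k n : nat) : R :=
  frc (c * INR (n + k)) * (/ bseq c (n + k) - / bseq c n).

Definition ratio_rem (k : nat) : R :=
  sum1 err_ratio k + Series (fun m => err_cross k (S m)).

Lemma bseq_ratio_decomp (k n : nat) : (1 <= n)%nat ->
  bseq c (n + k) / bseq c n
  = 1 + INR k / INR n + INR k * recip_dev c n + (err_ratio n - err_ratio (n + k))
    + err_cross k n.
Proof.
  intros Hn. unfold recip_dev, err_ratio, err_cross, frc.
  change (flr (c * INR n)) with (bseq c n). change (flr (c * INR (n + k))) with (bseq c (n + k)).
  pose proof (bseq_pos c c_gt1 n Hn). pose proof (bseq_pos c c_gt1 (n + k) ltac:(lia)).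
  assert (1 <= INR n) by (apply (le_INR 1); exact Hn).
  rewrite plus_INR. field. repeat split; lra.
Qed.

Lemma inv_bseq_bounds (n : nat) : (1 <= n)%nat -> 0 <= / bseq c n <= / INR n.
Proof.
  intros Hn. pose proof (bseq_ge c c_gt1 n).
  assert (1 <= INR n) by (apply (le_INR 1); exact Hn).
  split; [apply Rlt_le, Rinv_0_lt_compat; lra|]. apply Rinv_le_contravar; lra.
Qed.

Lemma err_ratio_bounds (n : nat) : (1 <= n)%nat -> 0 <= err_ratio n <= / INR n.
Proof.
  intros Hn. pose proof (inv_bseq_bounds n Hn). pose proof (frc_bounds (c * INR n)).
  unfold err_ratio, Rdiv. split; [apply Rmult_le_pos; lra|].
  apply Rle_trans with (1 * / bseq c n); [apply Rmult_le_compat_r; lra|lra].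
Qed.

Lemma err_cross_abs (k n : nat) : (1 <= n)%nat ->
  Rabs (err_cross k n) <= / bseq c n - / bseq c (n + k).
Proof.
  intros Hn. unfold err_cross.
  pose proof (bseq_pos c c_gt1 n Hn). pose proof (bseq_le c c_gt1 n (n + k) ltac:(lia)).
  assert (/ bseq c (n + k) <= / bseq c n) by (apply Rinv_le_contravar; lra).
  pose proof (frc_bounds (c * INR (n + k))).
  rewrite Rabs_mult, (Rabs_pos_eq (frc _)), Rabs_minus_sym, Rabs_pos_eq by lra.
  apply Rle_trans with (1 * (/ bseq c n - / bseq c (n + k))); [apply Rmult_le_compat_r|]; lra.
Qed.

Lemma is_series_inv_bseq_telescope (k : nat) :
  is_series (fun m => / bseq c (S m) - / bseq c (S m + k)) (sum1 (fun n => / bseq c n) k).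
Proof.
  apply (is_series_telescope (fun n => / bseq c n)).
  apply is_lim_seq_le_inv_INR. exact inv_bseq_bounds.
Qed.

Lemma ex_series_err_cross_abs (k : nat) : ex_series (fun m => Rabs (err_cross k (S m))).
Proof.
  apply (@ex_series_le R_AbsRing R_CompleteNormedModule _
           (fun m => / bseq c (S m) - / bseq c (S m + k))).
  - intro m. change norm with Rabs. rewrite Rabs_Rabsolu. apply err_cross_abs. lia.
  - eexists. apply is_series_inv_bseq_telescope.
Qed.

Lemma Series_err_cross_bound (k : nat) :
  Rabs (Series (fun m => err_cross k (S m))) <= sum1 (fun n => / bseq c n) k.
Proof.
  eapply Rle_trans; [apply Series_Rabs, ex_series_err_cross_abs|].
  rewrite <- (is_series_unique _ _ (is_series_inv_bseq_telescope k)).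
  apply Series_le; [|eexists; apply is_series_inv_bseq_telescope].
  intro m. split; [apply Rabs_pos|]. apply err_cross_abs. lia.
Qed.

Lemma is_series_ratio_rem (k : nat) :
  is_series (fun m => (err_ratio (S m) - err_ratio (S m + k)) + err_cross k (S m))
    (ratio_rem k).
Proof.
  apply (is_series_plus _ _ _ _
    (is_series_telescope _ k (is_lim_seq_le_inv_INR _ err_ratio_bounds))).
  apply Series_correct, ex_series_Rabs, ex_series_err_cross_abs.
Qed.

Lemma ratio_rem_bound (k : nat) : Rabs (ratio_rem k) <= 2 * harm k.
Proof.
  unfold ratio_rem. pose proof (Series_err_cross_bound k).
  assert (0 <= sum1 err_ratio k <= harm k).
  { split; [apply sum1_nonneg|apply sum1_le]; intros m Hm; apply err_ratio_bounds; lia. }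
  assert (sum1 (fun n => / bseq c n) k <= harm k).
  { apply sum1_le. intros m Hm. apply inv_bseq_bounds. lia. }
  eapply Rle_trans; [apply Rabs_triang|]. rewrite (Rabs_pos_eq (sum1 err_ratio k)); lra.
Qed.

Lemma is_series_bseq_ratio (k : nat) : irrational c ->
  is_series (fun m => bseq c (S m + k) / bseq c (S m) - 1 - INR k / INR (S m))
    (INR k * (1 + ln c - Series (fun m => frac_term c (S m))) + ratio_rem k).
Proof.
  intros c_irr.
  refine (is_series_ext _ _ _ _ (is_series_plus _ _ _ _
    (is_series_scal (INR k) _ _ (is_series_recip_dev c c_gt1 c_irr)) (is_series_ratio_rem k))).
  intro m. rewrite bseq_ratio_decomp by lia. unfold plus, scal; simpl.
  unfold mult; simpl. ring.
Qed.

End Ratio_decomposition.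

Lemma lim_linear_plus_harm (P C : R) (u : nat -> R) :
  (forall k, Rabs (u k) <= C * harm k) ->
  is_lim_seq (fun k => / INR k * (INR k * P + u k)) P.
Proof.
  intro Hu. apply (is_lim_seq_incr_1 (fun k => / INR k * (INR k * P + u k))).
  apply is_lim_seq_ext with (fun k => P + u (S k) / INR (S k)).
  { intro k. pose proof (lt_0_INR (S k) ltac:(lia)). field. lra. }
  assert (Hdiv : is_lim_seq (fun k => u (S k) / INR (S k)) 0).
  { apply is_lim_seq_abs_0.
    apply is_lim_seq_le_le with (fun _ => 0) (fun k => C * (harm (S k) / INR (S k))).
    - intro k. pose proof (lt_0_INR (S k) ltac:(lia)). split; [apply Rabs_pos|].
      rewrite Rabs_div, (Rabs_pos_eq (INR _)) by lra. unfold Rdiv. rewrite <- Rmult_assoc.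
      apply Rmult_le_compat_r; [apply Rlt_le, Rinv_0_lt_compat; lra|apply Hu].
    - apply is_lim_seq_const.
    - assert (L := is_lim_seq_scal_l _ C _ (proj1 (is_lim_seq_incr_1 _ 0) lim_harm_div)).
      simpl in L. now rewrite Rmult_0_r in L. }
  assert (L := is_lim_seq_plus' _ _ P 0 (is_lim_seq_const P) Hdiv).
  now rewrite Rplus_0_r in L.
Qed.

Theorem mainTheorem1 (a b : R) (ha : 1 < a) (hb : 1 < b)
  (ia : irrational a) (ib : irrational b) :
  exists (S : nat -> R) (T : R),
    (forall k : nat, (1 <= k)%nat ->
       is_series (fun m : nat => term1 a b k (Datatypes.S m)) (S k)) /\
    is_series (fun m : nat => term2 a b (Datatypes.S m)) T /\
    is_lim_seq (fun k : nat => / INR k * S k + T) (ln (a / b)).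
Proof.
  pose (T c := Series (fun m => frac_term c (Datatypes.S m))).
  pose (P c := 1 + ln c - T c).
  exists (fun k => (INR k * P a + ratio_rem a k) - (INR k * P b + ratio_rem b k)), (T a - T b).
  split; [|split].
  - intros k _.
    refine (is_series_ext _ _ _ _ (is_series_minus _ _ _ _
      (is_series_bseq_ratio a ha k ia) (is_series_bseq_ratio b hb k ib))).
    intro m. unfold term1, plus, opp; simpl. ring.
  - refine (is_series_ext _ _ _ _ (is_series_minus _ _ _ _
      (Series_correct _ (ex_series_frac_term a ha)) (Series_correct _ (ex_series_frac_term b hb)))).
    intro m. unfold term2, frac_term, plus, opp; simpl. unfold Rdiv. ring.
  - assert (Hrem : forall k, Rabs (ratio_rem a k - ratio_rem b k) <= 4 * harm k).
    { intro k. pose proof (ratio_rem_bound a ha k). pose proof (ratio_rem_bound b hb k).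
      eapply Rle_trans; [apply Rabs_triang|]. rewrite Rabs_Ropp. lra. }
    assert (L := is_lim_seq_plus' _ _ _ (T a - T b)
      (lim_linear_plus_harm (P a - P b) 4 _ Hrem) (is_lim_seq_const _)).
    replace (ln (a / b)) with (P a - P b + (T a - T b))
      by (rewrite ln_div by lra; unfold P; ring).
    refine (is_lim_seq_ext _ _ _ _ L). intro k. simpl. f_equal. f_equal. ring.
Qed.
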